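(* Let $n\ge 1$ and let $T\in M(n;\mathbb{C})$ be non-singular with $\mathrm{Im}\,T$ positive definite. Let $r\in\mathbb{N}$, $A=(a_{ij})\in M(n;\mathbb{Z})$, $p,q\in\mathbb{R}^n$, let $r'\in\mathbb{N}$ be the integer attached to $(r,A)$ as in the context, and let $\mathcal{U}=\{V_1,\dots,V_n,U_1,\dots,U_n\}\subset U(r')$ satisfy $V_jV_k=V_kV_j$, $U_jU_k=U_kU_j$, $\zeta^{-a_{kj}}U_kV_j=V_jU_k$ for all $j,k$, where $\zeta=e^{2\pi\mathbf{i}/r}$. Then the complex vector bundle $E_{(r,A,r',\mathcal{U},p,q)}\to T^{2n}_{J=T}$ with connection $\nabla_{(r,A,r',\mathcal{U},p,q)}$ is holomorphic (that is, the $(0,2)$-part of the curvature of $\nabla_{(r,A,r',\mathcal{U},p,q)}$ vanishes, so that its $(0,1)$-part defines a holomorphic structure) if and only if $AT=(AT)^t$.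
   Context: $T^{2n}_{J=T}:=\mathbb{C}^n/2\pi(\mathbb{Z}^n\oplus T\mathbb{Z}^n)$, identified with $\mathbb{R}^{2n}/2\pi\mathbb{Z}^{2n}$ via real coordinates $(x,y)\in\mathbb{R}^n\times\mathbb{R}^n$, with complex coordinates $z=x+Ty$. Definition of $r'$: choose $\mathcal{A},\mathcal{B}\in GL(n;\mathbb{Z})$ with $\mathcal{A}A\mathcal{B}=\mathrm{diag}(\tilde a_1,\dots,\tilde a_s,0,\dots,0)$, $\tilde a_i\in\mathbb{N}$, $\tilde a_i\mid\tilde a_{i+1}$; write $\tilde a_i/r=a_i'/r_i'$ with $r_i'\in\mathbb{N}$, $a_i'\in\mathbb{Z}$, $\gcd(r_i',a_i')=1$, and set $r':=r_1'\cdots r_s'$ (this depends only on $(r,A)$). The rank-$r'$ complex vector bundle $E_{(r,A,r',\mathcal{U},p,q)}$ is defined by transition functions: its smooth sections are smooth maps $\psi:\mathbb{R}^{2n}\to\mathbb{C}^{r'}$ with $\psi(x+2\pi e_j,y)=e^{\frac{\mathbf{i}}{r}a_jy}V_j\psi(x,y)$ and $\psi(x,y+2\pi e_k)=U_k\psi(x,y)$, where $a_jy:=\sum_i a_{ij}y_i$ ($e_j$ the standard basis vectors). Its connection is $\nabla_{(r,A,r',\mathcal{U},p,q)}:=d-\frac{\mathbf{i}}{2\pi}\left(\frac1r x^tA^t+\frac1r p^t+\frac1r q^tT\right)dy\cdot I_{r'}$, where $dy=(dy_1,\dots,dy_n)^t$; it is compatible with the transition functions. *)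

From HB Require Import structures.
From mathcomp Require Import all_boot all_order all_algebra.
From mathcomp Require Import all_classical all_reals all_analysis.
From mathcomp Require Import complex.
Set Implicit Arguments. Unset Strict Implicit. Unset Printing Implicit Defensive.
Import Order.TTheory GRing.Theory Num.Theory.
Local Open Scope ring_scope.
Local Open Scope complex_scope.

Section Defs.
Variable R : realType.
Local Notation C := (R[i]).

Definition xcoord n (u : 'rV[R]_(n + n)) : 'rV[R]_n := lsubmx u.
Definition ycoord n (u : 'rV[R]_(n + n)) : 'rV[R]_n := rsubmx u.

Definition evec m (mu : 'I_m) : 'rV[R]_m := delta_mx 0 mu.

Definition cpartial m (g : 'rV[R]_m -> C) (mu : 'I_m) (u : 'rV[R]_m) : C :=
  (derive1 (fun t : R => complex.Re (g (u + t *: evec mu))) 0)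
    +i* (derive1 (fun t : R => complex.Im (g (u + t *: evec mu))) 0).

Definition mxpartial m k (g : 'rV[R]_m -> 'M[C]_k) (mu : 'I_m) (u : 'rV[R]_m)
  : 'M[C]_k := \matrix_(a, b) cpartial (fun v => g v a b) mu u.

(* A connection d + omega on a trivialised rank-k bundle over R^m, with
   omega = sum_mu omega_mu du_mu (omega_mu : R^m -> M_k(C)).  Its curvature
   Omega = d omega + omega /\ omega has components
   Omega_{mu nu} = d_mu omega_nu - d_nu omega_mu + [omega_mu, omega_nu]. *)
Definition curvature m k (omega : 'I_m -> 'rV[R]_m -> 'M[C]_k)
  (u : 'rV[R]_m) (mu nu : 'I_m) : 'M[C]_k :=
  mxpartial (omega nu) mu u - mxpartial (omega mu) nu u
  + (omega mu u *m omega nu u - omega nu u *m omega mu u).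

Definition eval2 m k (F : 'I_m -> 'I_m -> 'M[C]_k) (v w : 'rV[C]_m) : 'M[C]_k :=
  \sum_(mu < m) \sum_(nu < m) (v 0 mu * w 0 nu) *: F mu nu.

(* Complex structure J = T on R^{2n}: z = x + T y, i.e. dz_j = dx_j + sum_k T_jk dy_k.
   T^{0,1} = complexified tangent vectors annihilated by all dz_j. *)
Definition in_T01 n (T : 'M[C]_n) (v : 'rV[C]_(n + n)) : Prop :=
  forall j : 'I_n, lsubmx v 0 j + \sum_(k < n) T j k * rsubmx v 0 k = 0.

Definition curvature02_vanishes n k (T : 'M[C]_n)
  (omega : 'I_(n + n) -> 'rV[R]_(n + n) -> 'M[C]_k) : Prop :=
  forall (u : 'rV[R]_(n + n)) (v w : 'rV[C]_(n + n)),
    in_T01 T v -> in_T01 T w -> eval2 (curvature omega u) v w = 0.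

(* nabla = d - (i/2pi) ( (1/r) x^t A^t + (1/r) p^t + (1/r) q^t T ) dy . I_{r'} ;
   the coefficient of dy_i is (A x)_i + p_i + (q^t T)_i. *)
Definition conn_coeff n (r : nat) (A : 'M[int]_n) (p q : 'rV[R]_n) (T : 'M[C]_n)
  (u : 'rV[R]_(n + n)) (i : 'I_n) : C :=
  - ('i / (2 * pi)%:C) *
    ((r%:R : R)^-1)%:C *
    ( (\sum_(j < n) ((A i j)%:~R * xcoord u 0 j))%:C
      + (p 0 i)%:C
      + \sum_(k < n) (q 0 k)%:C * T k i ).

Definition conn_form n (r : nat) (A : 'M[int]_n) (r' : nat) (p q : 'rV[R]_n)
  (T : 'M[C]_n) : 'I_(n + n) -> 'rV[R]_(n + n) -> 'M[C]_r' :=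
  fun mu u => match fintype.split mu with
              | inl _ => 0
              | inr i => conn_coeff r A p q T u i *: 1%:M
              end.

Definition unimodular n (M : 'M[int]_n) : Prop := \det M = 1 \/ \det M = -1.

Definition attached_rank n (r : nat) (A : 'M[int]_n) (r' : nat) : Prop :=
  exists (PA QB : 'M[int]_n) (s : nat) (at_ : nat -> nat)
         (rr : nat -> nat) (aa : nat -> int),
    unimodular PA /\ unimodular QB /\ (s <= n)%N /\
        PA *m A *m QB = \matrix_(i, j) (if (i == j :> nat) && (i < s)%N
                                         then (at_ i)%:Z else 0) /\
        (forall i, (i < s)%N -> 0 < at_ i)%N /\
        (forall i, (i.+1 < s)%N -> at_ i %| at_ i.+1)%N /\
        (forall i, (i < s)%N -> (0 < rr i)%N /\ coprime (rr i) `|aa i|%N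
                                /\ (at_ i)%:Z * (rr i)%:Z = aa i * r%:Z) /\
        r' = (\prod_(i < s) rr i)%N.

Definition unitary k (U : 'M[C]_k) : Prop := U *m (map_mx conjc U)^T = 1%:M.

Definition zeta (r : nat) : C :=
  cos (2 * pi / r%:R) +i* sin (2 * pi / r%:R).

End Defs.

From HB Require Import structures.
From mathcomp Require Import all_boot all_order all_algebra.
From mathcomp Require Import all_classical all_reals all_analysis.
From mathcomp Require Import complex.
From mathcomp Require Import ring.
Import Order.TTheory GRing.Theory Num.Theory.
Local Open Scope ring_scope.
Local Open Scope complex_scope.
Set Implicit Arguments. Unset Strict Implicit. Unset Printing Implicit Defensive.

(** The connection form is scalar, so its curvature is just the exterior
  derivative of its coefficients; the only non-zero components are those of
  [dx_j /\ dy_i], with constant value [kappa A_ij], [kappa = -i/(2 pi r)].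
  A vector of type (0,1) satisfies [dx = - T dy], so on two such vectors the
  curvature is [kappa dy^t (AT - (AT)^t) dy]; as the [dy]-parts of (0,1)
  vectors are arbitrary, the (0,2)-part vanishes iff [AT] is symmetric. *)

Section ScalarConnections.
Variable R : realType.
Local Notation C := R[i].

Lemma derive1_affine (a b : R) : derive1 (fun t : R => a + t * b) 0 = b.
Proof.
rewrite derive1E; apply: derive_val; apply: is_derive_eq.
by rewrite /= add0r mul1r scaler0 add0r; exact: mulr1.
Qed.

Lemma cpartial_affine m (g : 'rV[R]_m -> C) mu u (d : C) :
  (forall t, g (u + t *: evec R mu) = g u + t%:C * d) -> cpartial g mu u = d.
Proof.
move=> g_affine; rewrite /cpartial.
have ReE t : complex.Re (g (u + t *: evec R mu)) = complex.Re (g u) + t * complex.Re d.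
  by rewrite g_affine; case: (g u) (d) => ? ? [? ?] /=; rewrite mul0r subr0.
have ImE t : complex.Im (g (u + t *: evec R mu)) = complex.Im (g u) + t * complex.Im d.
  by rewrite g_affine; case: (g u) (d) => ? ? [? ?] /=; rewrite mul0r addr0.
by rewrite (funext ReE) (funext ImE) !derive1_affine; case: (d).
Qed.

Lemma mxpartial_scalar m k (g : 'rV[R]_m -> C) mu u :
  mxpartial (fun v => g v *: (1%:M : 'M[C]_k)) mu u = cpartial g mu u *: 1%:M.
Proof.
apply/matrixP => a b; rewrite !mxE.
rewrite (_ : (fun v => _) = fun v => g v * (a == b)%:R); last first.
  by apply: funext => v; rewrite !mxE.
case: eqP => _ /=.
  by rewrite (_ : (fun v => g v * 1) = g) ?mulr1 //; apply: funext => v; rewrite mulr1.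
by rewrite mulr0; apply: cpartial_affine => t /=; rewrite !mulr0 addr0.
Qed.

Lemma curvature_scalar m k (c : 'I_m -> 'rV[R]_m -> C) u mu nu :
  curvature (fun mu v => c mu v *: (1%:M : 'M[C]_k)) u mu nu
  = (cpartial (c nu) mu u - cpartial (c mu) nu u) *: 1%:M.
Proof.
rewrite /curvature !mxpartial_scalar -!scalemxAl -!scalemxAr mul1mx !scalerA.
by rewrite mulrC subrr addr0 scalerBl.
Qed.

Lemma eval2_scalar m k (F : 'M[C]_m) (v w : 'rV[C]_m) :
  eval2 (fun mu nu => F mu nu *: (1%:M : 'M[C]_k)) v w = (v *m F *m w^T) 0 0 *: 1%:M.
Proof.
rewrite /eval2 mxE exchange_big scaler_suml; apply: eq_bigr => nu _.
rewrite !mxE mulr_suml scaler_suml; apply: eq_bigr => mu _.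
by rewrite scalerA mulrAC.
Qed.

End ScalarConnections.

Lemma bilinear_trmx (K : comPzRingType) n (x y : 'rV[K]_n) (M : 'M[K]_n) :
  x *m M *m y^T = y *m M^T *m x^T.
Proof.
have trmx11 (X : 'M[K]_1) : X^T = X by apply/matrixP => i j; rewrite !ord1 mxE.
by rewrite -[LHS]trmx11 !trmx_mul trmxK mulmxA.
Qed.

Lemma bilinear_block_ur (K : pzRingType) n (x y : 'rV[K]_(n + n)) (M : 'M[K]_n) :
  x *m block_mx 0 M 0 0 *m y^T = lsubmx x *m M *m (rsubmx y)^T.
Proof.
rewrite -[x]hsubmxK -[y]hsubmxK mul_row_block tr_row_mx mul_row_col.
by rewrite !mulmx0 !addr0 mul0mx add0r !row_mxKl !row_mxKr.
Qed.

Lemma scalemx1_eq0 (K : pzRingType) k (c : K) :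
  (0 < k)%N -> (c *: (1%:M : 'M[K]_k) == 0) = (c == 0).
Proof.
move=> k_gt0; apply/eqP/eqP => [|->]; last exact: scale0r.
by move=> /matrixP /(_ (Ordinal k_gt0) (Ordinal k_gt0)); rewrite !mxE eqxx mulr1.
Qed.

Lemma in_T01P (R : realType) n (T : 'M[R[i]]_n) (v : 'rV[R[i]]_(n + n)) :
  in_T01 T v <-> lsubmx v = - (rsubmx v *m T^T).
Proof.
have dzE j : (rsubmx v *m T^T) 0 j = \sum_(k < n) T j k * rsubmx v 0 k.
  by rewrite [LHS]mxE; apply: eq_bigr => k _; rewrite [T^T _ _]mxE mulrC.
split=> [v01 | vxE j].
  by apply/rowP => j; rewrite [RHS]mxE; apply/eqP; rewrite -addr_eq0 dzE v01.
by rewrite vxE mxE dzE addNr.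
Qed.

Lemma attached_rank_gt0 n r (A : 'M[int]_n) r' : attached_rank r A r' -> (0 < r')%N.
Proof.
case=> PA [QB [s [at_ [rr [aa [_ [_ [_ [_ [_ [_ [rr_gt0 ->]]]]]]]]]]]].
by apply: prodn_gt0 => i; case: (rr_gt0 i (ltn_ord i)).
Qed.

Section Connection.
Variables (R : realType) (n r : nat) (A : 'M[int]_n) (p q : 'rV[R]_n) (T : 'M[R[i]]_n).
Local Notation C := R[i].
Local Notation Ac := (map_mx (fun z : int => z%:~R) A : 'M[C]_n).

Definition kappa : C := - ('i / (2 * pi)%:C) * ((r%:R : R)^-1)%:C.

Lemma kappa_neq0 : (0 < r)%N -> kappa != 0.
Proof.
move=> r_gt0; have realC_neq0 (x : R) : x != 0 -> x%:C != 0.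
  by apply: contra => /eqP [/eqP].
have i_neq0 : ('i : C) != 0 by apply/eqP => -[] /eqP; rewrite oner_eq0.
rewrite mulf_neq0 ?oppr_eq0 ?mulf_neq0 ?invr_eq0 // realC_neq0 //.
- by rewrite mulf_neq0 ?pnatr_eq0 // gt_eqF ?pi_gt0.
- by rewrite invr_eq0 pnatr_eq0 -lt0n.
Qed.

Definition dy_coeff (mu : 'I_(n + n)) (u : 'rV[R]_(n + n)) : C :=
  match fintype.split mu with
  | inl _ => 0
  | inr i => conn_coeff r A p q T u i
  end.

Lemma conn_formE r' : conn_form r A r' p q T = fun mu u => dy_coeff mu u *: 1%:M.
Proof.
apply: funext => mu; apply: funext => u; rewrite /conn_form /dy_coeff.
by case: fintype.split => // _; rewrite scale0r.
Qed.

Definition dy_jacobian : 'M[C]_(n + n) := kappa *: block_mx 0 Ac^T 0 0.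

Lemma conn_coeff_shift u t (e : 'rV[R]_(n + n)) i :
  conn_coeff r A p q T (u + t *: e) i
  = conn_coeff r A p q T u i + t%:C * (kappa * (\sum_j (A i j)%:~R * xcoord e 0 j)%:C).
Proof.
rewrite /conn_coeff -/kappa.
have -> : \sum_j (A i j)%:~R * xcoord (u + t *: e) 0 j
          = \sum_j (A i j)%:~R * xcoord u 0 j + t * \sum_j (A i j)%:~R * xcoord e 0 j.
  rewrite mulr_sumr -big_split; apply: eq_bigr => j _.
  by rewrite /xcoord !mxE mulrDr mulrCA.
by rewrite !rmorphD rmorphM /=; ring.
Qed.

Lemma dy_coeff_shift mu nu u t :
  dy_coeff nu (u + t *: evec R mu) = dy_coeff nu u + t%:C * dy_jacobian mu nu.
Proof.
rewrite /dy_coeff /dy_jacobian mxE.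
case: (split_ordP nu) => [j ->|i ->]; case: (split_ordP mu) => [j' ->|k ->];
  rewrite ?block_mxEul ?block_mxEdl ?block_mxEur ?block_mxEdr ?mxE ?mulr0 ?addr0 //;
  rewrite conn_coeff_shift.
- rewrite (bigD1 j') //= big1 => [|j /negbTE j'j]; rewrite /xcoord /evec !mxE.
    by rewrite !eqxx mulr1n mulr1 addr0 rmorph_int.
  by rewrite eq_lshift j'j mulr0.
- rewrite big1 => [|j _]; last by rewrite /xcoord /evec !mxE eq_lrshift andbF mulr0.
  by rewrite mulr0 mulr0 addr0.
Qed.

Lemma cpartial_dy_coeff mu nu u : cpartial (dy_coeff nu) mu u = dy_jacobian mu nu.
Proof. exact/cpartial_affine/dy_coeff_shift. Qed.

Lemma curvature_conn_form r' u :
  curvature (conn_form r A r' p q T) u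
  = fun mu nu => (dy_jacobian - dy_jacobian^T) mu nu *: 1%:M.
Proof.
apply: funext => mu; apply: funext => nu.
by rewrite conn_formE curvature_scalar !cpartial_dy_coeff !mxE.
Qed.

Lemma curvature02_conn_form r' u v w : in_T01 T v -> in_T01 T w ->
  eval2 (curvature (conn_form r A r' p q T) u) v w
  = (kappa * (rsubmx v *m (Ac *m T - (Ac *m T)^T) *m (rsubmx w)^T) 0 0) *: 1%:M.
Proof.
move=> /in_T01P v01 /in_T01P w01.
rewrite curvature_conn_form eval2_scalar /dy_jacobian; congr (_ *: _).
rewrite linearZ /= -scalerBr -scalemxAr -scalemxAl mxE.
congr (_ * fun_of_matrix _ 0 0).
rewrite mulmxBr mulmxBl [v *m _^T *m _]bilinear_trmx trmxK !bilinear_block_ur v01 w01.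
rewrite mulmxBr mulmxBl [rsubmx v *m (_ *m T) *m _]bilinear_trmx !trmx_mul.
by rewrite !mulNmx !mulmxA opprK addrC.
Qed.

End Connection.

Theorem proposition3p1 (R : realType) (n : nat) (T : 'M[R[i]]_n)
  (r : nat) (A : 'M[int]_n) (p q : 'rV[R]_n) (r' : nat)
  (V U : 'I_n -> 'M[R[i]]_r') :
  (1 <= n)%N ->
  T \in unitmx ->
  (forall v : 'rV[R]_n, v != 0 -> 0 < (v *m map_mx (@complex.Im R) T *m v^T) 0 0) ->
  (0 < r)%N ->
  attached_rank r A r' ->
  (forall j, unitary (V j)) -> (forall k, unitary (U k)) ->
  (forall j k, V j *m V k = V k *m V j) ->
  (forall j k, U j *m U k = U k *m U j) ->
  (forall j k, (zeta R r ^ (- A k j)) *: (U k *m V j) = V j *m U k) ->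
  (curvature02_vanishes T (conn_form r A r' p q T)
   <-> map_mx (fun z : int => z%:~R) A *m T = (map_mx (fun z : int => z%:~R) A *m T)^T).
Proof.
move=> _ _ _ r_gt0 /attached_rank_gt0 r'_gt0 _ _ _ _ _.
split=> [flat | symB u v w v01 w01]; last first.
  by rewrite curvature02_conn_form // -symB subrr mulmx0 mul0mx mxE mulr0 scale0r.
have T01_of (a : 'rV[R[i]]_n) : in_T01 T (row_mx (- (a *m T^T)) a).
  by apply/in_T01P; rewrite row_mxKl row_mxKr.
apply/eqP; rewrite -subr_eq0; apply/eqP/matrixP => i k; rewrite [RHS]mxE; apply/eqP.
have := flat 0 _ _ (T01_of (delta_mx 0 i)) (T01_of (delta_mx 0 k)).
rewrite curvature02_conn_form // !row_mxKr => /eqP.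
rewrite scalemx1_eq0 // mulf_eq0 (negbTE (kappa_neq0 R r_gt0)) /=.
by rewrite -rowE trmx_delta -colE [col _ _ 0 0]mxE [row _ _ 0 k]mxE.
Qed.
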